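(* For $t\in[0,1]$ and $x\ge 0$ define \[ f_t(x)=(1-t)\int_0^{1}x^{t\alpha}\,d\alpha+t\,x^{t}\int_0^{1}x^{(1-t)\alpha}\,d\alpha \] (with the convention $0^0=1$). Then for all $x\ge 0$ and all $t\in[0,1]$, \[ x^t\le f_t(x)\le \tfrac12\left(x^t+1-t+tx\right). \]
   Context: For $t\in(0,1)$ and $x>0$, $x\neq1$, one has $f_t(x)=\frac{1}{\log x}\left(\frac{1-t}{t}(x^t-1)+\frac{t}{1-t}x^t(x^{1-t}-1)\right)$; $f_t$ is the representing function of the weighted logarithmic mean. *)

From Stdlib Require Import Reals.
From Coquelicot Require Import Coquelicot.
Open Scope R_scope.

Definition rpow (x y : R) : R :=
  if Req_EM_T x 0 then (if Req_EM_T y 0 then 1 else 0) else Rpower x y.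

Definition f_t (t x : R) : R :=
  (1 - t) * RInt (fun a => rpow x (t * a)) 0 1
  + t * rpow x t * RInt (fun a => rpow x ((1 - t) * a)) 0 1.

(** For [x > 0] write [x = exp L]; then [f_t t x = (1-t) G(tL) + t e^(tL) G((1-t)L)] with
    [G c = int_0^1 e^(c a) da] ([exp_mean] below).  The Hermite-Hadamard inequalities for the
    convex function [exp] give [e^(c/2) <= G c <= (1 + e^c)/2].  The upper bounds add up to the claimed upper
    bound exactly; the lower bounds add up to a convex combination of exponentials, which by
    convexity dominates [e^(tL) = x^t]. *)

From Stdlib Require Import Reals Lra Psatz.
From Coquelicot Require Import Coquelicot.
Open Scope R_scope.

Lemma exp_tangent_le y z : exp z * (1 + (y - z)) <= exp y.
Proof.
  replace (exp y) with (exp z * exp (y - z)).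
  - apply Rmult_le_compat_l; [left; apply exp_pos | apply exp_ineq1_le].
  - rewrite <- exp_plus; f_equal; ring.
Qed.

Lemma exp_convex a u v : 0 <= a <= 1 ->
  exp ((1 - a) * u + a * v) <= (1 - a) * exp u + a * exp v.
Proof.
  intros Ha. set (m := (1 - a) * u + a * v).
  pose proof (exp_tangent_le u m) as Hu. pose proof (exp_tangent_le v m) as Hv.
  assert (Hm : exp m = (1 - a) * (exp m * (1 + (u - m))) + a * (exp m * (1 + (v - m))))
    by (unfold m; ring).
  rewrite Hm. apply Rplus_le_compat; apply Rmult_le_compat_l; lra.
Qed.

Lemma RInt_affine_01 A B : RInt (fun a => A + B * a) 0 1 = A + B / 2.
Proof.
  apply is_RInt_unique.
  replace (A + B / 2) with
    (minus ((fun a => A * a + B * (a * a) / 2) 1) ((fun a => A * a + B * (a * a) / 2) 0))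
    by (unfold minus, plus, opp; simpl; field).
  apply (is_RInt_derive (fun a => A * a + B * (a * a) / 2)).
  - intros a _. auto_derive; [auto | field].
  - intros a _. apply (ex_derive_continuous (fun a => A + B * a)). auto_derive; auto.
Qed.

Lemma ex_RInt_affine_01 A B : ex_RInt (fun a => A + B * a) 0 1.
Proof.
  apply (ex_RInt_continuous (V := R_CompleteNormedModule)). intros a _.
  apply (ex_derive_continuous (fun a => A + B * a)). auto_derive; auto.
Qed.

Definition exp_mean (c : R) : R := RInt (fun a => exp (c * a)) 0 1.

Lemma ex_RInt_exp_mean c : ex_RInt (fun a => exp (c * a)) 0 1.
Proof.
  apply (ex_RInt_continuous (V := R_CompleteNormedModule)). intros a _.
  apply (ex_derive_continuous (fun a => exp (c * a))). auto_derive; auto.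
Qed.

(* Integrate the tangent line of [a |-> e^(c a)] at the midpoint [a = 1/2]. *)
Lemma exp_mean_ge c : exp (c / 2) <= exp_mean c.
Proof.
  replace (exp (c / 2)) with (exp (c / 2) * (1 - c / 2) + exp (c / 2) * c / 2) by field.
  rewrite <- RInt_affine_01. apply RInt_le; [lra | apply ex_RInt_affine_01 |
    apply ex_RInt_exp_mean |].
  intros a _. pose proof (exp_tangent_le (c * a) (c / 2)). nra.
Qed.

(* Integrate the chord of [a |-> e^(c a)] over [0, 1]. *)
Lemma exp_mean_le c : exp_mean c <= (1 + exp c) / 2.
Proof.
  replace ((1 + exp c) / 2) with (1 + (exp c - 1) / 2) by field.
  rewrite <- RInt_affine_01. apply RInt_le; [lra | apply ex_RInt_exp_mean |
    apply ex_RInt_affine_01 |].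
  intros a Ha. pose proof (exp_convex a 0 c ltac:(lra)) as Hc.
  rewrite exp_0 in Hc. replace ((1 - a) * 0 + a * c) with (c * a) in Hc by ring. lra.
Qed.

Lemma rpow_exp x y : 0 < x -> rpow x y = exp (y * ln x).
Proof. intros Hx. unfold rpow. destruct (Req_EM_T x 0); [lra | reflexivity]. Qed.

Lemma rpow_0_l y : y <> 0 -> rpow 0 y = 0.
Proof.
  intros Hy. unfold rpow.
  destruct (Req_EM_T 0 0); [destruct (Req_EM_T y 0) |]; easy.
Qed.

Lemma rpow_0_0 : rpow 0 0 = 1.
Proof. unfold rpow. destruct (Req_EM_T 0 0); easy. Qed.

Lemma f_t_exp t L :
  f_t t (exp L) = (1 - t) * exp_mean (t * L) + t * exp (t * L) * exp_mean ((1 - t) * L).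
Proof.
  unfold f_t, exp_mean. rewrite rpow_exp, ln_exp by apply exp_pos.
  f_equal; [f_equal | f_equal]; apply RInt_ext; intros a _;
    rewrite rpow_exp, ln_exp by apply exp_pos; f_equal; ring.
Qed.

Lemma RInt_const_01 (c : R) : RInt (fun _ => c) 0 1 = c.
Proof. rewrite RInt_const. unfold scal; simpl; unfold mult; simpl. ring. Qed.

Lemma f_t_0_r t : 0 < t <= 1 -> f_t t 0 = 0.
Proof.
  intros Ht. unfold f_t. rewrite (rpow_0_l t) by lra.
  rewrite (RInt_ext _ (fun _ => 0)), RInt_const_01; [ring |].
  intros a Ha. rewrite Rmin_left, Rmax_right in Ha by lra.
  apply rpow_0_l. nra.
Qed.

Lemma f_t_0_0 : f_t 0 0 = 1.
Proof.
  unfold f_t. rewrite (RInt_ext _ (fun _ => 1)), RInt_const_01; [ring |].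
  intros a _. rewrite Rmult_0_l. exact rpow_0_0.
Qed.

Lemma f_t_exp_ge t L : 0 <= t <= 1 -> exp (t * L) <= f_t t (exp L).
Proof.
  intros Ht. rewrite f_t_exp.
  pose proof (exp_mean_ge (t * L)). pose proof (exp_mean_ge ((1 - t) * L)).
  pose proof (exp_pos (t * L)).
  (* [t L] is the [t]-convex combination of [t L / 2] and [t L + (1 - t) L / 2]. *)
  pose proof (exp_convex t (t * L / 2) (t * L + (1 - t) * L / 2) Ht) as Hc.
  replace ((1 - t) * (t * L / 2) + t * (t * L + (1 - t) * L / 2)) with (t * L) in Hc
    by field.
  rewrite exp_plus in Hc.
  assert (t * exp (t * L) * exp ((1 - t) * L / 2)
          <= t * exp (t * L) * exp_mean ((1 - t) * L)) by
    (apply Rmult_le_compat_l; [apply Rmult_le_pos |]; lra).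
  nra.
Qed.

Lemma f_t_exp_le t L : 0 <= t <= 1 ->
  f_t t (exp L) <= (exp (t * L) + 1 - t + t * exp L) / 2.
Proof.
  intros Ht. rewrite f_t_exp.
  pose proof (exp_mean_le (t * L)). pose proof (exp_mean_le ((1 - t) * L)).
  pose proof (exp_pos (t * L)).
  assert (Hx : exp (t * L) * exp ((1 - t) * L) = exp L)
    by (rewrite <- exp_plus; f_equal; ring).
  assert (t * exp (t * L) * exp_mean ((1 - t) * L)
          <= t * exp (t * L) * ((1 + exp ((1 - t) * L)) / 2)) by
    (apply Rmult_le_compat_l; [apply Rmult_le_pos |]; lra).
  nra.
Qed.

Theorem lemma2p3 (x t : R) (hx : 0 <= x) (ht0 : 0 <= t) (ht1 : t <= 1) :
  rpow x t <= f_t t x /\ f_t t x <= (rpow x t + 1 - t + t * x) / 2.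
Proof.
  destruct hx as [hx | <-].
  - rewrite <- (exp_ln x) by exact hx.
    rewrite rpow_exp, ln_exp by apply exp_pos.
    split; [apply f_t_exp_ge | apply f_t_exp_le]; lra.
  - destruct ht0 as [ht0 | <-].
    + rewrite rpow_0_l, f_t_0_r by lra. lra.
    + rewrite rpow_0_0, f_t_0_0. lra.
Qed.
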